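(* The sets $R_s$, $R_b$, $R_t$ are non-empty. Moreover: (i) $R_s$ contains a neighborhood (relative to $[0,1]^2$) of $\boldsymbol h=(h_1,h_2)$; (ii) $R_b\cap([h_1,1]\times[h_2,1])=\emptyset$; for every $m_1\in[0,1]$ there is $\delta>0$ with $(m_1,\epsilon)\in R_b$ for all $\epsilon\in[0,\delta)$; and for every $m_2\in[0,1]$ there is $\delta>0$ with $(\epsilon,m_2)\in R_b$ for all $\epsilon\in[0,\delta)$; (iii) $R_t\cap([0,h_1)\times[0,h_2))=\emptyset$, and there is $\delta>0$ such that $(1-\epsilon,1-\epsilon)\in R_t$ for all $\epsilon\in[0,\delta)$.
   Context: Fix a cumulative distribution function $F$ on $[0,1]^2$ with a density $f$ that has full support on $[0,1]^2$, a constant $c\in(0,1)$ and $\boldsymbol h=(h_1,h_2)\in(0,1)^2$. For $\boldsymbol x,\boldsymbol y\in[0,1]^2$ write $\boldsymbol x\vee\boldsymbol y=(\max\{x_1,y_1\},\max\{x_2,y_2\})$, and for $F(\boldsymbol x)<1$ let $n(\boldsymbol x)=\frac{1}{c(1-F(\boldsymbol x))}$. For $\boldsymbol m\in[0,1]^2$ define $\bar w_s=F(\boldsymbol h)$, $\bar w_b=n(\boldsymbol m)\big(F(\boldsymbol m\vee\boldsymbol h)-F(\boldsymbol m)\big)$ (with $\bar w_b:=0$ if $F(\boldsymbol m)=1$), $\bar w_t=F(\boldsymbol m\vee\boldsymbol h)-F(\boldsymbol m)/n(\boldsymbol h)$, and the regions $R_s=\{\boldsymbol m\in[0,1]^2:\bar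 w_s\ge\max\{\bar w_b,\bar w_t\}\}$, $R_b=\{\boldsymbol m:\bar w_b>\max\{\bar w_s,\bar w_t\}\}$, $R_t=[0,1]^2\setminus(R_s\cup R_b)$. (Interpretation: these are the maximal wages that single-layer, bottom-automated and top-automated firms can pay when machines rent at $F(\boldsymbol m)$.) *)

From HB Require Import structures.
From mathcomp Require Import all_boot all_order all_algebra.
From mathcomp Require Import all_classical all_reals all_analysis.
Set Implicit Arguments. Unset Strict Implicit. Unset Printing Implicit Defensive.
Import Order.TTheory GRing.Theory Num.Theory.
Local Open Scope classical_set_scope.
Local Open Scope ring_scope.

Section Defs.
Variable R : realType.

Definition leb2 := ((@lebesgue_measure R) \x (@lebesgue_measure R))%E.

Definition mass (f : R * R -> R) (A : set (R * R)) : \bar R :=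
  (\int[leb2]_(p in A) (f p)%:E)%E.

Definition unit_square : set (R * R) := `[0, 1] `*` `[0, 1].

Definition is_density_on_square (f : R * R -> R) : Prop :=
  [/\ measurable_fun setT f, (forall p, 0 <= f p),
      mass f setT = 1%E & mass f unit_square = 1%E].

Definition full_support (f : R * R -> R) : Prop :=
  forall p, unit_square p -> forall r : R, 0 < r ->
    (0%E < mass f (`]p.1 - r, p.1 + r[ `*` `]p.2 - r, p.2 + r[)%R)%E.

Definition cdf (f : R * R -> R) (x : R * R) : R :=
  fine (mass f (`]-oo, x.1] `*` `]-oo, x.2])).

Definition vee (x y : R * R) : R * R := (Num.max x.1 y.1, Num.max x.2 y.2).

Definition nn (f : R * R -> R) (c : R) (x : R * R) : R :=
  1 / (c * (1 - cdf f x)).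

Definition ws (f : R * R -> R) (h : R * R) : R := cdf f h.

Definition wb (f : R * R -> R) (c : R) (h m : R * R) : R :=
  if cdf f m == 1 then 0
  else nn f c m * (cdf f (vee m h) - cdf f m).

Definition wt (f : R * R -> R) (c : R) (h m : R * R) : R :=
  cdf f (vee m h) - cdf f m / nn f c h.

Definition Rs (f : R * R -> R) (c : R) (h : R * R) : set (R * R) :=
  [set m | unit_square m /\
     Num.max (wb f c h m) (wt f c h m) <= ws f h].

Definition Rb (f : R * R -> R) (c : R) (h : R * R) : set (R * R) :=
  [set m | unit_square m /\
     Num.max (ws f h) (wt f c h m) < wb f c h m].

Definition Rt (f : R * R -> R) (c : R) (h : R * R) : set (R * R) :=
  unit_square `\` (Rs f c h `|` Rb f c h).

End Defs.

(* The measure with density f gives no mass to horizontal and vertical lines,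
   so the mass of the two closed strips of half-width r crossing at a point a
   tends to 0 with r.  Quadrants cornered within r of a differ from the one
   cornered at a only inside these strips, which controls F near every point;
   moreover F vanishes on the lower edges of the square, F (1, 1) = 1, and
   full support gives 0 < F h < 1.
   With k = c (1 - F h) one has wt = F (m \/ h) - k F m, and wb = 0 as soon
   as m \/ h = m.  At m = h both wb = 0 and wt = (1 - k) F h lie strictly
   below ws = F h, and this persists near h.  Near the lower edges F m is
   small while F (m \/ h) >= F h, so wb = (F (m \/ h) - F m) / (c (1 - F m))
   exceeds both other wages.  Near (1, 1) wb vanishes while wt = (1 - k) F m
   exceeds F h once F m is close to 1.  Below h, m \/ h = h forces wt <= ws,
   so m lies in Rs or Rb. *)

From Pilot Require Import Defs.
From HB Require Import structures.
From mathcomp Require Import all_boot all_order all_algebra.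
From mathcomp Require Import all_classical all_reals all_analysis.
From mathcomp Require Import measurable_realfun lra.
Set Implicit Arguments.
Unset Strict Implicit.
Unset Printing Implicit Defensive.
Import Order.TTheory GRing.Theory Num.Theory.
Local Open Scope classical_set_scope.
Local Open Scope ring_scope.

Lemma nonincreasing_measure_lt d (R : realType) (T : measurableType d)
    (mu : {measure set T -> \bar R}) (F : (set T)^nat) :
  (mu (F 0%N) < +oo)%E -> (forall n, measurable (F n)) -> nonincreasing_seq F ->
  mu (\bigcap_n F n) = 0%E -> forall e, 0 < e -> exists n, (mu (F n) < e%:E)%E.
Proof.
move=> muF0 mF decrF cap0 e e0.
have mcap : measurable (\bigcap_n F n) by exact: bigcapT_measurable.
have := nonincreasing_cvg_mu muF0 mF mcap decrF; rewrite cap0 => /fine_cvgP[_ cvF].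
have [N _ /(_ N (leqnn N)) /= muFN] := cvgr_lt _ cvF _ e0.
exists N; rewrite -(fineK (_ : mu (F N) \is a fin_num)) ?lte_fin // ge0_fin_numE //.
by apply: le_lt_trans muF0; apply: le_measure; rewrite ?inE //; exact/subsetPset/decrF.
Qed.

Section DensityMeasure.
Variables (R : realType) (f : R * R -> R).
Hypotheses (mf : measurable_fun setT f) (f0 : forall p, 0 <= f p).

Definition density_measure := mass f.

Let mu0 : density_measure set0 = 0%E.
Proof. exact: integral_set0. Qed.

Let mu_ge0 A : (0 <= density_measure A)%E.
Proof. by apply: integral_ge0 => x _; rewrite lee_fin. Qed.

Let mu_sigma_additive : semi_sigma_additive density_measure.
Proof.
apply: (@semi_sigma_additive_nng_induced _ _ _ (@leb2 R) (EFin \o f)).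
  exact/measurable_EFinP.
by move=> x; rewrite lee_fin.
Qed.

HB.instance Definition _ := isMeasure.Build _ _ _ density_measure
  mu0 mu_ge0 mu_sigma_additive.

Local Notation mu := density_measure.

Definition axes (a : R * R) : set (R * R) :=
  [set a.1] `*` setT `|` setT `*` [set a.2].

Lemma measurable_axes a : measurable (axes a).
Proof. by apply: measurableU; exact: measurableX. Qed.

Lemma leb2_axes a : leb2 (axes a) = 0%E.
Proof.
have vline0 : leb2 ([set a.1] `*` setT) = 0%E.
  rewrite /leb2 product_measure1E //.
  by rewrite -[X in (X * _)%E]/(lebesgue_measure [set a.1]) lebesgue_measure_set1 mul0e.
have hline0 : leb2 (setT `*` [set a.2]) = 0%E.
  rewrite /leb2 product_measure1E //.
  by rewrite -[X in (_ * X)%E]/(lebesgue_measure [set a.2]) lebesgue_measure_set1 mule0.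
apply/le_anti; rewrite measure_ge0 andbT -(adde0 0%E) -{1}vline0 -hline0.
by apply: measureU2; exact: measurableX.
Qed.

Lemma density_measure_axes a : mu (axes a) = 0%E.
Proof.
apply: null_set_integral; [exact: measurable_axes | | exact: leb2_axes].
by apply/measurable_EFinP; exact: measurable_funS mf.
Qed.

Hypothesis mass_setT : mass f setT = 1%E.

Definition pr A := fine (mu A).

Lemma muE A : measurable A -> mu A = (pr A)%:E.
Proof.
move=> mA; rewrite /pr fineK // ge0_fin_numE //.
apply: (@le_lt_trans _ _ (mu setT)); last by rewrite [mu setT]mass_setT ltry.
by apply: le_measure; rewrite ?inE.
Qed.

Lemma pr_ge0 A : 0 <= pr A.
Proof. exact: fine_ge0. Qed.

Lemma le_pr A B : measurable A -> measurable B -> A `<=` B -> pr A <= pr B.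
Proof. by move=> mA mB AB; rewrite -lee_fin -!muE //; apply: le_measure; rewrite ?inE. Qed.

Lemma pr_le1 A : measurable A -> pr A <= 1.
Proof.
move=> mA; have := le_pr mA measurableT (@subsetT _ A).
by rewrite /pr [mu setT]mass_setT.
Qed.

Lemma prU_le A B : measurable A -> measurable B -> pr (A `|` B) <= pr A + pr B.
Proof.
move=> mA mB; rewrite -lee_fin EFinD -!muE //; last exact: measurableU.
exact: measureU2.
Qed.

Lemma prU A B : measurable A -> measurable B -> A `&` B = set0 ->
  pr (A `|` B) = pr A + pr B.
Proof.
move=> mA mB AB0; apply: EFin_inj; rewrite EFinD -!muE //; last exact: measurableU.
exact: measureU.
Qed.

Definition cross (a : R * R) (r : R) : set (R * R) :=
  `[a.1 - r, a.1 + r] `*` setT `|` setT `*` `[a.2 - r, a.2 + r].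

Lemma measurable_cross a r : measurable (cross a r).
Proof. by apply: measurableU; exact: measurableX. Qed.

Lemma subset_cross a r s : r <= s -> cross a r `<=` cross a s.
Proof.
move=> rs; have sub_itv x : `[x - r, x + r] `<=` `[x - s, x + s].
  by move=> y /=; rewrite !in_itv /= => /andP[]; lra.
by move=> p [] [p1 p2]; [left | right]; split => //; exact: sub_itv.
Qed.

Lemma pr_cross_small a e : 0 < e -> exists2 r, 0 < r & pr (cross a r) < e.
Proof.
move=> e0; pose C n := cross a n.+1%:R^-1.
have decrC : nonincreasing_seq C.
  move=> m n mn; apply/subsetPset/subset_cross.
  by rewrite lef_pV2 ?ler_nat ?posrE.
have capC : \bigcap_n C n `<=` axes a.
  move=> p Cp; apply: contrapT => /not_orP[].
  rewrite /setX /= => /not_andP[] // /eqP p1 /not_andP[] // /eqP p2.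
  have r0 : 0 < Num.min `|p.1 - a.1| `|p.2 - a.2| by rewrite lt_min !normr_gt0 !subr_eq0 p1 p2.
  have [N _ /(_ N (leqnn N)) /= ltN] := near_infty_natSinv_lt (PosNum r0).
  by case: (Cp N I) => -[] /= => [+ _ | _ +];
    rewrite in_itv /= -ler_distlC distrC => /le_lt_trans /(_ ltN);
    rewrite lt_min ltxx //= andbF.
have cap0 : mu (\bigcap_n C n) = 0%E.
  apply/le_anti; rewrite measure_ge0 andbT -(density_measure_axes a).
  apply: le_measure capC; rewrite inE; last exact: measurable_axes.
  by apply: bigcapT_measurable => n; exact: measurable_cross.
have muC0 : (mu (C 0%N) < +oo)%E.
  by rewrite muE ?ltry //; exact: measurable_cross.
have [n Cn] := @nonincreasing_measure_lt _ _ _ mu C muC0 (fun=> measurable_cross _ _)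
  decrC cap0 _ e0.
exists n.+1%:R^-1; first by rewrite invr_gt0.
by rewrite -lte_fin -muE //; exact: measurable_cross.
Qed.

Hypothesis mass_square : mass f (@unit_square R) = 1%E.

Lemma measurable_unit_square : measurable (@unit_square R).
Proof. exact: measurableX. Qed.

Lemma pr_unit_square : pr (@unit_square R) = 1.
Proof. by rewrite /pr [mu _]mass_square. Qed.

Lemma pr_setC_unit_square : pr (~` @unit_square R) = 0.
Proof.
have := prU measurable_unit_square (measurableC measurable_unit_square) (setICr _).
by rewrite setUv pr_unit_square -[pr setT]/(fine (mu setT)) [mu setT]mass_setT /=; lra.
Qed.

Definition quadrant (x : R * R) : set (R * R) := `]-oo, x.1] `*` `]-oo, x.2].

Lemma measurable_quadrant x : measurable (quadrant x).
Proof. exact: measurableX. Qed.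

(* Plain [cdf] would be MathComp-Analysis' cdf of a random variable. *)
Local Notation F := (Defs.cdf f).

Lemma cdfE x : F x = pr (quadrant x).
Proof. by []. Qed.

Lemma cdf_ge0 x : 0 <= F x.
Proof. exact: pr_ge0. Qed.

Lemma cdf_le1 x : F x <= 1.
Proof. exact: (pr_le1 (measurable_quadrant x)). Qed.

Lemma le_cdf x y : x.1 <= y.1 -> x.2 <= y.2 -> F x <= F y.
Proof.
move=> xy1 xy2; rewrite !cdfE; apply: le_pr; try exact: measurable_quadrant.
move=> p [/=]; rewrite !in_itv /= => p1 p2.
by split; [exact: le_trans xy1 | exact: le_trans xy2].
Qed.

Lemma quadrant_sub_cross a x m r : a.1 - r <= x.1 -> m.1 <= a.1 + r ->
  a.2 - r <= x.2 -> m.2 <= a.2 + r -> quadrant m `<=` quadrant x `|` cross a r.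
Proof.
move=> xa1 ma1 xa2 ma2 p [/=]; rewrite !in_itv /= => p1 p2.
case: (lerP p.1 x.1) => px1; case: (lerP p.2 x.2) => px2.
- by left; split; rewrite /= in_itv.
- by right; right; split => //=; rewrite in_itv /=; apply/andP; split; lra.
- by right; left; split => //=; rewrite in_itv /=; apply/andP; split; lra.
- by right; left; split => //=; rewrite in_itv /=; apply/andP; split; lra.
Qed.

Lemma cdf_le_cross a x m r : a.1 - r <= x.1 -> m.1 <= a.1 + r ->
  a.2 - r <= x.2 -> m.2 <= a.2 + r -> F m <= F x + pr (cross a r).
Proof.
move=> xa1 ma1 xa2 ma2.
apply: le_trans _ (prU_le (measurable_quadrant x) (measurable_cross a r)).
rewrite cdfE; apply: le_pr (quadrant_sub_cross xa1 ma1 xa2 ma2); first exact: measurable_quadrant.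
by apply: measurableU; [exact: measurable_quadrant | exact: measurable_cross].
Qed.

Lemma cdf_le_cross_above a x r : x.1 <= a.1 + r -> x.2 <= a.2 + r ->
  F x <= F a + pr (cross a r).
Proof.
move=> xa1 xa2; case: (leP 0 r) => r0; first by apply: cdf_le_cross => //; lra.
have := pr_ge0 (cross a r); have : F x <= F a by apply: le_cdf; lra.
lra.
Qed.

Lemma cdf_le_cross_below a x r : a.1 - r <= x.1 -> a.2 - r <= x.2 ->
  F a <= F x + pr (cross a r).
Proof.
move=> xa1 xa2; case: (leP 0 r) => r0; first by apply: cdf_le_cross => //; lra.
have := pr_ge0 (cross a r); have : F a <= F x by apply: le_cdf; lra.
lra.
Qed.

Lemma cdf_eq0 x : x.1 <= 0 \/ x.2 <= 0 -> F x = 0.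
Proof.
move=> x_le0; apply/le_anti; rewrite cdf_ge0 andbT.
have mN : measurable (~` @unit_square R `|` axes 0).
  by apply: measurableU; [exact: measurableC measurable_unit_square | exact: measurable_axes].
have QN : quadrant x `<=` ~` @unit_square R `|` axes 0.
  move=> p [/=]; rewrite !in_itv /= => px1 px2.
  have [[/=]|] := pselect (@unit_square R p); last by left.
  rewrite !in_itv /= => /andP[p1 _] /andP[p2 _]; right.
  by case: x_le0 => ?; [left | right]; split => //=; apply/le_anti/andP; split; lra.
apply: le_trans (le_pr (measurable_quadrant x) mN QN) _.
apply: le_trans (prU_le (measurableC measurable_unit_square) (measurable_axes 0)) _.
by rewrite pr_setC_unit_square /pr density_measure_axes add0r.
Qed.

Lemma cdf11 : F (1, 1) = 1.
Proof.
apply/le_anti; rewrite cdf_le1 -{1}pr_unit_square cdfE.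
apply: le_pr; [exact: measurable_unit_square | exact: measurable_quadrant |].
by move=> p [/=]; rewrite !in_itv /= => /andP[_ ?] /andP[_ ?].
Qed.

Hypothesis f_full_support : full_support f.

Definition box (p : R * R) (r : R) : set (R * R) :=
  `]p.1 - r, p.1 + r[ `*` `]p.2 - r, p.2 + r[.

Lemma measurable_box p r : measurable (box p r).
Proof. exact: measurableX. Qed.

Lemma pr_box_gt0 p r : unit_square p -> 0 < r -> 0 < pr (box p r).
Proof.
by move=> sp r0; rewrite -lte_fin -muE; [exact: f_full_support | exact: measurable_box].
Qed.

Lemma cdf_gt0 x : 0 < x.1 <= 1 -> 0 < x.2 <= 1 -> 0 < F x.
Proof.
move=> /andP[x10 x11] /andP[x20 x21].
pose r := Num.min x.1 x.2 / 2.
have r0 : 0 < r by rewrite divr_gt0 // lt_min x10 x20.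
have r1 : r <= x.1 / 2 by rewrite ler_pM2r ?invr_gt0 // ge_min lexx.
have r2 : r <= x.2 / 2 by rewrite ler_pM2r ?invr_gt0 // ge_min lexx orbT.
have sp : unit_square (x.1 / 2, x.2 / 2).
  by split; rewrite /= in_itv /=; apply/andP; split; lra.
apply: lt_le_trans (pr_box_gt0 sp r0) _; rewrite cdfE.
apply: le_pr; [exact: measurable_box | exact: measurable_quadrant |].
by move=> p [/=]; rewrite !in_itv /= => /andP[_ ?] /andP[_ ?]; split; rewrite /= in_itv /=; lra.
Qed.

Lemma cdf_lt1 x : x.1 < 1 -> x.2 < 1 -> F x < 1.
Proof.
move=> x1 x2; pose r := Num.min (1 - x.1) (1 - x.2).
have r0 : 0 < r by rewrite lt_min !subr_gt0 x1 x2.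
have r1 : r <= 1 - x.1 by rewrite ge_min lexx.
have r2 : r <= 1 - x.2 by rewrite ge_min lexx orbT.
have s11 : @unit_square R (1, 1) by split; rewrite /= in_itv /= ler01 lexx.
have disj : quadrant x `&` box (1, 1) r = set0.
  by apply/seteqP; split => // p [[/= + _] [/= + _]]; rewrite !in_itv /= => ? /andP[? _]; lra.
have := prU (measurable_quadrant x) (measurable_box (1, 1) r) disj.
have := pr_le1 (measurableU _ _ (measurable_quadrant x) (measurable_box (1, 1) r)).
have := pr_box_gt0 s11 r0; rewrite cdfE; lra.
Qed.

Section Regions.
Variables (c : R) (h : R * R).
Hypotheses (c01 : 0 < c < 1) (h1_01 : 0 < h.1 < 1) (h2_01 : 0 < h.2 < 1).

Local Notation Rs := (Rs f c h).
Local Notation Rb := (Rb f c h).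
Local Notation Rt := (Rt f c h).

Lemma cdf_h_gt0 : 0 < F h.
Proof. by case/andP: h1_01 h2_01 => ? ? /andP[? ?]; apply: cdf_gt0; apply/andP; split; lra. Qed.

Lemma cdf_h_lt1 : F h < 1.
Proof. by case/andP: h1_01 h2_01 => _ ? /andP[_ ?]; apply: cdf_lt1. Qed.

Lemma wtE m : wt f c h m = F (vee m h) - F m * (c * (1 - F h)).
Proof. by rewrite /wt /nn div1r invrK. Qed.

Lemma wbE m : F m != 1 -> wb f c h m = (F (vee m h) - F m) / (c * (1 - F m)).
Proof. by move=> Fm1; rewrite /wb (negbTE Fm1) /nn div1r mulrC. Qed.

Lemma le_cdf_veel m : F m <= F (vee m h).
Proof. by apply: le_cdf; rewrite /= le_max lexx. Qed.

Lemma le_cdf_veer m : F h <= F (vee m h).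
Proof. by apply: le_cdf; rewrite /= le_max lexx orbT. Qed.

Lemma vee_l m : h.1 <= m.1 -> h.2 <= m.2 -> vee m h = m.
Proof. by case: m => m1 m2 /= hm1 hm2; rewrite /vee /= !max_l. Qed.

Lemma vee_r m : m.1 <= h.1 -> m.2 <= h.2 -> vee m h = h.
Proof. by case: h => h1 h2 /= hm1 hm2; rewrite /vee /= !max_r. Qed.

Lemma notRb_of_vee_id m : vee m h = m -> ~ Rb m.
Proof.
move=> vm [_]; have -> : wb f c h m = 0.
  by rewrite /wb; case: ifP => // _; rewrite vm subrr mulr0.
by rewrite gt_max /ws => /andP[]; have := cdf_h_gt0; lra.
Qed.

Lemma Rs_or_Rb_of_wt_le m : unit_square m -> wt f c h m <= ws f h -> Rs m \/ Rb m.
Proof.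
move=> sm wt_le; case: (lerP (wb f c h m) (ws f h)) => wb_ws.
  by left; split; rewrite // ge_max wb_ws.
by right; split; rewrite // gt_max (le_lt_trans wt_le wb_ws) wb_ws.
Qed.

Lemma Rs_of_near m e : unit_square m -> e <= (1 - F h) / 2 ->
    e <= F h * (c * (1 - F h)) / 4 ->
  F (vee m h) < F h + e -> F h - e < F m -> Rs m.
Proof.
move=> sm e1 e2 upper lower; have [a0 a1] := (cdf_h_gt0, cdf_h_lt1).
have /andP[c0 c1] := c01; have Fmv := le_cdf_veel m.
have k0 : 0 < c * (1 - F h) by rewrite mulr_gt0 // subr_gt0.
have k1 : c * (1 - F h) < 1 by nra.
have Fm1 : F m < 1 by lra.
split => //; rewrite ge_max /ws wtE wbE ?lt_eqF //; apply/andP; split.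
  rewrite ler_pdivrMr ?mulr_gt0 ?subr_gt0 //.
  have : 0 <= (1 - F m - (1 - F h) / 2) * (F h * c) by rewrite mulr_ge0 ?mulr_ge0; lra.
  nra.
have : 0 <= (F m - (F h - e)) * (c * (1 - F h)) by rewrite mulr_ge0; lra.
nra.
Qed.

Lemma Rb_of_small_cdf m : unit_square m -> F m < F h * (1 - c) -> Rb m.
Proof.
move=> sm small; have [a0 a1] := (cdf_h_gt0, cdf_h_lt1).
have /andP[c0 c1] := c01; have X1 := cdf_le1 (vee m h).
have aX := le_cdf_veer m; have B0 := cdf_ge0 m.
have Fm1 : F m < 1 by nra.
have wb_gt : F (vee m h) < wb f c h m.
  rewrite wbE ?lt_eqF // ltr_pdivlMr ?mulr_gt0 ?subr_gt0 //.
  have : 0 <= (F (vee m h) - F h) * (1 - c) by apply: mulr_ge0; lra.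
  have : 0 <= F (vee m h) * c * F m by rewrite !mulr_ge0 //; lra.
  nra.
split => //; rewrite gt_max /ws (le_lt_trans aX wb_gt) wtE /=.
apply: le_lt_trans wb_gt; rewrite gerBl !mulr_ge0 //; lra.
Qed.

Lemma Rt_of_large_cdf m : unit_square m -> vee m h = m ->
  1 - (1 - c) * (1 - F h) / 2 < F m -> Rt m.
Proof.
move=> sm vm large; have [a0 a1] := (cdf_h_gt0, cdf_h_lt1).
have /andP[c0 c1] := c01.
split => // -[[_]|]; last exact: notRb_of_vee_id.
rewrite ge_max /ws wtE vm => /andP[_]; apply/negP; rewrite -ltNge.
have : 0 < (F m - (1 - (1 - c) * (1 - F h) / 2)) * (1 - c * (1 - F h)).
  by apply: mulr_gt0; nra.
have : 0 < (1 - c) * (1 - F h) by apply: mulr_gt0; lra.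
have : 0 <= (1 - c) * (1 - F h) * (c * (1 - F h)) by rewrite !mulr_ge0 //; lra.
nra.
Qed.

Lemma Rs_near_h : exists2 d, 0 < d & forall m, unit_square m ->
  `|m.1 - h.1| < d -> `|m.2 - h.2| < d -> Rs m.
Proof.
have [a0 a1] := (cdf_h_gt0, cdf_h_lt1); have /andP[c0 c1] := c01.
pose e := Num.min ((1 - F h) / 2) (F h * (c * (1 - F h)) / 4).
have e0 : 0 < e by rewrite lt_min !divr_gt0 ?mulr_gt0 ?subr_gt0.
have [d d0 cross_lt] := pr_cross_small h e0.
have e1 : e <= (1 - F h) / 2 by rewrite ge_min lexx.
have e2 : e <= F h * (c * (1 - F h)) / 4 by rewrite ge_min lexx orbT.
exists d => // m sm; rewrite !ltr_distlC => /andP[lo1 hi1] /andP[lo2 hi2].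
apply: (Rs_of_near sm e1 e2).
  have v1 : (vee m h).1 <= h.1 + d by rewrite /= ge_max; apply/andP; split; lra.
  have v2 : (vee m h).2 <= h.2 + d by rewrite /= ge_max; apply/andP; split; lra.
  by have := cdf_le_cross_above v1 v2; lra.
have m1 : h.1 - d <= m.1 by lra.
have m2 : h.2 - d <= m.2 by lra.
by have := cdf_le_cross_below m1 m2; lra.
Qed.

Lemma notRb_upper m : h.1 <= m.1 -> h.2 <= m.2 -> ~ Rb m.
Proof. by move=> hm1 hm2; apply: notRb_of_vee_id; exact: vee_l. Qed.

Lemma Rb_near_lower_edges a : a.1 <= 0 \/ a.2 <= 0 -> exists2 d, 0 < d &
  forall m, unit_square m -> m.1 <= a.1 + d -> m.2 <= a.2 + d -> Rb m.
Proof.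
move=> a_edge; have /andP[_ c1] := c01.
have e0 : 0 < F h * (1 - c) by rewrite mulr_gt0 ?subr_gt0 ?cdf_h_gt0.
have [d d0 cross_lt] := pr_cross_small a e0.
exists d => // m sm m1 m2; apply: Rb_of_small_cdf => //.
by have := cdf_le_cross_above m1 m2; rewrite (cdf_eq0 a_edge); lra.
Qed.

Lemma Rb_near_bottom_edge m1 : 0 <= m1 <= 1 -> exists2 d, 0 < d &
  forall e, 0 <= e < d -> Rb (m1, e).
Proof.
move=> /andP[m10 m11]; have [|d d0 Rb_near] := @Rb_near_lower_edges (m1, 0); first by right.
exists (Num.min d 1); first by rewrite lt_min d0 ltr01.
move=> e /andP[e0]; rewrite lt_min => /andP[ed e1]; apply: Rb_near => /=; try lra.
by split; rewrite /= in_itv /=; apply/andP; split; lra.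
Qed.

Lemma Rb_near_left_edge m2 : 0 <= m2 <= 1 -> exists2 d, 0 < d &
  forall e, 0 <= e < d -> Rb (e, m2).
Proof.
move=> /andP[m20 m21]; have [|d d0 Rb_near] := @Rb_near_lower_edges (0, m2); first by left.
exists (Num.min d 1); first by rewrite lt_min d0 ltr01.
move=> e /andP[e0]; rewrite lt_min => /andP[ed e1]; apply: Rb_near => /=; try lra.
by split; rewrite /= in_itv /=; apply/andP; split; lra.
Qed.

Lemma notRt_lower m : 0 <= m.1 < h.1 -> 0 <= m.2 < h.2 -> ~ Rt m.
Proof.
move=> /andP[m10 m1h] /andP[m20 m2h] [sm]; apply.
apply: Rs_or_Rb_of_wt_le => //; rewrite wtE (vee_r (ltW m1h) (ltW m2h)) /ws gerBl.
by rewrite !mulr_ge0 ?cdf_ge0 //; case/andP: c01 => *; [lra | have := cdf_h_lt1; lra].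
Qed.

Lemma Rt_near_top : exists2 d, 0 < d & forall e, 0 <= e < d -> Rt (1 - e, 1 - e).
Proof.
have [a0 a1] := (cdf_h_gt0, cdf_h_lt1); have /andP[c0 c1] := c01.
move: h1_01 h2_01 => /andP[h10 h11] /andP[h20 h21].
have e0 : 0 < (1 - c) * (1 - F h) / 2 by rewrite !divr_gt0 ?mulr_gt0 ?subr_gt0.
have [d d0 cross_lt] := pr_cross_small (1, 1) e0.
exists (Num.min d (Num.min (1 - h.1) (1 - h.2))); first by rewrite !lt_min d0 !subr_gt0 h11 h21.
move=> e /andP[e0']; rewrite !lt_min => /andP[ed /andP[e1 e2]].
apply: Rt_of_large_cdf.
- by split; rewrite /= in_itv /=; apply/andP; split; lra.
- by apply: vee_l => /=; lra.
- by have := @cdf_le_cross_below (1, 1) (1 - e, 1 - e) d; rewrite cdf11 /=; lra.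
Qed.

Lemma regions_nonempty : [/\ Rs !=set0, Rb !=set0 & Rt !=set0].
Proof.
split.
- have [d d0 Rs_h] := Rs_near_h; exists h; apply: Rs_h; rewrite ?subrr ?normr0 //.
  by case/andP: h1_01 h2_01 => ? ? /andP[? ?]; split; rewrite /= in_itv /=; apply/andP; split; lra.
- have [|d d0 Rb_bottom] := @Rb_near_bottom_edge 0; first by rewrite lexx ler01.
  by exists (0, 0); apply: Rb_bottom; rewrite lexx d0.
- have [d d0 Rt_top] := Rt_near_top.
  by exists (1 - 0, 1 - 0); apply: Rt_top; rewrite lexx d0.
Qed.

End Regions.

End DensityMeasure.

Theorem proposition2 (R : realType) (f : R * R -> R) (c : R) (h : R * R) :
  is_density_on_square f -> full_support f ->
  0 < c < 1 -> 0 < h.1 < 1 -> 0 < h.2 < 1 ->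
  [/\ [/\ Rs f c h !=set0, Rb f c h !=set0 & Rt f c h !=set0],
      (* (i) *)
      (exists2 d : R, 0 < d & forall m, unit_square m ->
          `|m.1 - h.1| < d -> `|m.2 - h.2| < d -> Rs f c h m),
      (* (ii) *)
      [/\ (forall m, h.1 <= m.1 <= 1 -> h.2 <= m.2 <= 1 -> ~ Rb f c h m),
          (forall m1, 0 <= m1 <= 1 -> exists2 d : R, 0 < d &
              forall e, 0 <= e < d -> Rb f c h (m1, e)) &
          (forall m2, 0 <= m2 <= 1 -> exists2 d : R, 0 < d &
              forall e, 0 <= e < d -> Rb f c h (e, m2))] &
      (* (iii) *)
      ((forall m, 0 <= m.1 < h.1 -> 0 <= m.2 < h.2 -> ~ Rt f c h m) /\
       (exists2 d : R, 0 < d &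
          forall e, 0 <= e < d -> Rt f c h (1 - e, 1 - e)))].
Proof.
move=> [mf f0 mT mS] fs hc hh1 hh2.
split; first exact: regions_nonempty.
- exact: Rs_near_h.
- split; [| exact: Rb_near_bottom_edge | exact: Rb_near_left_edge].
  by move=> m /andP[hm1 _] /andP[hm2 _]; exact: notRb_upper.
- by split; [exact: notRt_lower | exact: Rt_near_top].
Qed.
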